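(* Let $\mathfrak g$ be a real Lie algebra, $r\in\mathfrak g\otimes\mathfrak g$, and $\kappa\in\mathbb R$. Let $\alpha=(r-r^t)/2$ and $\beta=(r+r^t)/2$ (as linear maps $\mathfrak g^*\to\mathfrak g$), and suppose $\beta$ is invariant, i.e. $(\mathrm{ad}(x)\otimes\mathrm{id}+\mathrm{id}\otimes\mathrm{ad}(x))\beta=0$ for all $x\in\mathfrak g$. Then $r$ satisfies $[r_{12},r_{13}]+[r_{12},r_{23}]+[r_{13},r_{23}]=\frac{\kappa+1}{4}[r_{13}+r_{31},r_{23}+r_{32}]$ if and only if $[\alpha(a^* ),\alpha(b^* )]-\alpha(\mathrm{ad}^*(\alpha(a^* ))b^*-\mathrm{ad}^*(\alpha(b^* ))a^* )=\kappa[\beta(a^* ),\beta(b^* )]$ for all $a^*,b^*\in\mathfrak g^*$.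
   Context: $\mathfrak g$ is finite-dimensional. An element $r\in\mathfrak g\otimes\mathfrak g$ is identified with the linear map $r:\mathfrak g^*\to\mathfrak g$, $\langle r(a^* ),b^*\rangle=\langle a^*\otimes b^*,r\rangle$; $r^t$ is the map induced by $\sigma(r)$, where $\sigma(x\otimes y)=y\otimes x$. The coadjoint representation is $\langle\mathrm{ad}^*(x)a^*,y\rangle=-\langle a^*,[x,y]\rangle$. For $r=\sum_i a_i\otimes b_i$: $[r_{12},r_{13}]=\sum_{i,j}[a_i,a_j]\otimes b_i\otimes b_j$, $[r_{12},r_{23}]=\sum_{i,j}a_i\otimes[b_i,a_j]\otimes b_j$, $[r_{13},r_{23}]=\sum_{i,j}a_i\otimes a_j\otimes[b_i,b_j]$. Writing $s=r+\sigma(r)=\sum_k c_k\otimes d_k$, one has $r_{13}+r_{31}=s_{13}$, $r_{23}+r_{32}=s_{23}$, and $[r_{13}+r_{31},r_{23}+r_{32}]:=\sum_{k,l}c_k\otimes c_l\otimes[d_k,d_l]$. *)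

(* A finite-dimensional Lie algebra g of dimension n is
   modelled on the coordinate space 'rV[R]_n (basis e_i = delta_mx 0 i);
   its dual g^* is also 'rV[R]_n with pairing <a*, x> = sum_i a*_i x_i. *)
From HB Require Import structures.
From mathcomp Require Import all_boot all_order all_algebra.
Set Implicit Arguments. Unset Strict Implicit. Unset Printing Implicit Defensive.
Import Order.TTheory GRing.Theory Num.Theory.
Local Open Scope ring_scope.

Definition ebasis {R : nzRingType} {n : nat} (i : 'I_n) : 'rV[R]_n := delta_mx 0 i.

Definition is_lie_bracket (R : comNzRingType) (n : nat)
  (br : 'rV[R]_n -> 'rV[R]_n -> 'rV[R]_n) : Prop :=
  [/\ (forall (a : R) x y z, br (a *: x + y) z = a *: br x z + br y z),
      (forall (a : R) x y z, br x (a *: y + z) = a *: br x y + br x z),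
      (forall x, br x x = 0) &
      (forall x y z, br x (br y z) + br y (br z x) + br z (br x y) = 0)].

Definition pairing (R : nzRingType) (n : nat) (a x : 'rV[R]_n) : R :=
  \sum_(i < n) a 0 i * x 0 i.

(* Tensors: an element t of g (x) g is stored by its coefficients,
   t = sum_{i,j} t i j e_i (x) e_j, i.e. as a matrix 'M_n.
   Elements of g (x) g (x) g are stored as coefficient functions. *)
Notation tensor3 R n := {ffun 'I_n * 'I_n * 'I_n -> R^o}.

Definition tens2 (R : comNzRingType) (n : nat) (x y : 'rV[R]_n) : 'M[R]_n :=
  \matrix_(p, q) (x 0 p * y 0 q).

Definition tens3 (R : comNzRingType) (n : nat) (x y z : 'rV[R]_n) : tensor3 R n :=
  [ffun t => x 0 t.1.1 * y 0 t.1.2 * z 0 t.2].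

(* the linear map g^* -> g induced by t in g (x) g:
   <t(a^), b^> = <a* (x) b*, t>, i.e. t(a^) = sum_{i,j} t_ij a^_i e_j (a^ : dual vector) *)
Definition tmap (R : comNzRingType) (n : nat) (t : 'M[R]_n) (a : 'rV[R]_n) : 'rV[R]_n :=
  a *m t.

(* coadjoint action: <ad^*(x) a*, y> = - <a*, [x,y]> *)
Definition coad (R : comNzRingType) (n : nat) (br : 'rV[R]_n -> 'rV[R]_n -> 'rV[R]_n)
  (x a : 'rV[R]_n) : 'rV[R]_n :=
  \row_j (- pairing a (br x (ebasis j))).

(* With r = sum_{i,j} r_ij e_i (x) e_j = sum a_(ij) (x) b_(ij),
   a_(ij) = r_ij e_i, b_(ij) = e_j: *)
(* [r12, r13] = sum [a_i, a_j] (x) b_i (x) b_j *)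
Definition br12_13 (R : comNzRingType) (n : nat) (br : 'rV[R]_n -> 'rV[R]_n -> 'rV[R]_n)
  (r : 'M[R]_n) : tensor3 R n :=
  \sum_(i < n) \sum_(j < n) \sum_(k < n) \sum_(l < n)
     (r i j * r k l) *: tens3 (br (ebasis i) (ebasis k)) (ebasis j) (ebasis l).

(* [r12, r23] = sum a_i (x) [b_i, a_j] (x) b_j *)
Definition br12_23 (R : comNzRingType) (n : nat) (br : 'rV[R]_n -> 'rV[R]_n -> 'rV[R]_n)
  (r : 'M[R]_n) : tensor3 R n :=
  \sum_(i < n) \sum_(j < n) \sum_(k < n) \sum_(l < n)
     (r i j * r k l) *: tens3 (ebasis i) (br (ebasis j) (ebasis k)) (ebasis l).

(* [r13, r23] = sum a_i (x) a_j (x) [b_i, b_j] *)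
Definition br13_23 (R : comNzRingType) (n : nat) (br : 'rV[R]_n -> 'rV[R]_n -> 'rV[R]_n)
  (r : 'M[R]_n) : tensor3 R n :=
  \sum_(i < n) \sum_(j < n) \sum_(k < n) \sum_(l < n)
     (r i j * r k l) *: tens3 (ebasis i) (ebasis k) (br (ebasis j) (ebasis l)).

(* sigma(r) has coefficient matrix r^T; s = r + sigma(r);
   [r13 + r31, r23 + r32] := sum_{k,l} c_k (x) c_l (x) [d_k, d_l] = br13_23 s *)
Definition sym_bracket (R : comNzRingType) (n : nat) (br : 'rV[R]_n -> 'rV[R]_n -> 'rV[R]_n)
  (r : 'M[R]_n) : tensor3 R n :=
  br13_23 br (r + r^T).

Definition invariant_tensor (R : comNzRingType) (n : nat)
  (br : 'rV[R]_n -> 'rV[R]_n -> 'rV[R]_n) (t : 'M[R]_n) : Prop :=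
  forall x : 'rV[R]_n,
    \sum_(i < n) \sum_(j < n)
       t i j *: (tens2 (br x (ebasis i)) (ebasis j) + tens2 (ebasis i) (br x (ebasis j)))
    = 0.

From HB Require Import structures.
From mathcomp Require Import all_boot all_order all_algebra ring.
Import Order.TTheory GRing.Theory Num.Theory.
Set Implicit Arguments. Unset Strict Implicit. Unset Printing Implicit Defensive.
Local Open Scope ring_scope.

(* A 3-tensor is determined by its trilinear evaluations <a (x) b (x) c, T>.
   The evaluations of the three brackets of r are <a,[r^t b, r^t c]>,
   <b,[r a, r^t c]> and <c,[r a, r b]> (section BracketEvaluation).
   Invariance of beta says that its matrix is skew for every ad(x), i.e.
   <u,[x, beta v]> = -<v,[x, beta u]> (section Invariance).  Substituting
   r = alpha + beta, r^t = beta - alpha, skew-symmetry of alpha and this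
   identity cancel all mixed terms (lemma cybe_decomposition), so the
   evaluation of the difference of the two sides of the tensor equation is
   <c, [alpha a, alpha b] - alpha(...) - kappa [beta a, beta b]>
   (lemma tensor_equation_eval).  Nondegeneracy of the pairing and of the
   trilinear evaluation then give the two implications. *)

Section LieBracket.
Variables (R : comNzRingType) (n : nat) (br : 'rV[R]_n -> 'rV[R]_n -> 'rV[R]_n).
Hypothesis hlie : is_lie_bracket br.

Lemma brDl x y z : br (x + y) z = br x z + br y z.
Proof. by case: hlie => hl _ _ _; rewrite -[x]scale1r hl !scale1r. Qed.

Lemma brDr x y z : br z (x + y) = br z x + br z y.
Proof. by case: hlie => _ hr _ _; rewrite -[x]scale1r hr !scale1r. Qed.

Lemma br0l z : br 0 z = 0.
Proof. by apply: (@addrI _ (br 0 z)); rewrite -brDl !addr0. Qed.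

Lemma br0r z : br z 0 = 0.
Proof. by apply: (@addrI _ (br z 0)); rewrite -brDr !addr0. Qed.

Lemma brZl (a : R) x z : br (a *: x) z = a *: br x z.
Proof. by case: hlie => hl _ _ _; rewrite -[a *: x]addr0 hl br0l addr0. Qed.

Lemma brZr (a : R) x z : br z (a *: x) = a *: br z x.
Proof. by case: hlie => _ hr _ _; rewrite -[a *: x]addr0 hr br0r addr0. Qed.

Lemma brBl x y z : br (x - y) z = br x z - br y z.
Proof. by rewrite brDl -scaleN1r brZl scaleN1r. Qed.

Lemma brBr x y z : br z (x - y) = br z x - br z y.
Proof. by rewrite brDr -scaleN1r brZr scaleN1r. Qed.

Lemma br_anti x y : br x y = - br y x.
Proof.
case: hlie => _ _ halt _; apply/eqP; rewrite -addr_eq0; apply/eqP.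
by have := halt (x + y); rewrite brDl !brDr !halt add0r addr0 addrC.
Qed.

Lemma br_suml x (F : 'I_n -> 'rV[R]_n) : br (\sum_i F i) x = \sum_i br (F i) x.
Proof. exact: (big_morph (br^~ x) (fun u v => brDl u v x) (br0l x)). Qed.

Lemma br_sumr x (F : 'I_n -> 'rV[R]_n) : br x (\sum_i F i) = \sum_i br x (F i).
Proof. exact: (big_morph (br x) (fun u v => brDr u v x) (br0r x)). Qed.

End LieBracket.

Lemma pairing_is_additive (R : comNzRingType) n (a : 'rV[R]_n) :
  zmod_morphism (pairing a).
Proof. by move=> x y; rewrite /pairing -sumrB; apply: eq_bigr => i _; rewrite !mxE mulrBr. Qed.

HB.instance Definition _ (R : comNzRingType) n (a : 'rV[R]_n) :=
  GRing.isZmodMorphism.Build _ _ (pairing a) (pairing_is_additive a).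

Lemma pairingZr (R : comNzRingType) n (k : R) (a x : 'rV[R]_n) :
  pairing a (k *: x) = k * pairing a x.
Proof. by rewrite /pairing mulr_sumr; apply: eq_bigr => i _; rewrite mxE mulrCA. Qed.

Lemma pairingC (R : comNzRingType) n (a x : 'rV[R]_n) : pairing a x = pairing x a.
Proof. by apply: eq_bigr => i _; rewrite mulrC. Qed.

Lemma pairing_mx (R : comNzRingType) n (a x : 'rV[R]_n) : pairing a x = (a *m x^T) 0 0.
Proof. by rewrite mxE; apply: eq_bigr => i _; rewrite mxE. Qed.

Lemma sum_ebasis (R : comNzRingType) n (f : 'I_n -> R) j :
  \sum_i f i * (ebasis j : 'rV[R]_n) 0 i = f j.
Proof.
rewrite (bigD1 j) //= big1 => [|i /negPf ne]; last by rewrite mxE ne mulr0.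
by rewrite mxE !eqxx mulr1 addr0.
Qed.

Lemma pairing_ebasis (R : comNzRingType) n (a : 'rV[R]_n) j : pairing a (ebasis j) = a 0 j.
Proof. exact: sum_ebasis. Qed.

Lemma pairing_eq0 (R : comNzRingType) n (v : 'rV[R]_n) :
  (forall c, pairing c v = 0) -> v = 0.
Proof. by move=> hv; apply/rowP => j; rewrite mxE -(hv (ebasis j)) pairingC pairing_ebasis. Qed.

Lemma tmap_adjoint (R : comNzRingType) n (t : 'M[R]_n) (u v : 'rV[R]_n) :
  pairing (tmap t u) v = pairing (tmap t^T v) u.
Proof.
rewrite !pairing_mx.
have -> : tmap t^T v *m u^T = (tmap t u *m v^T)^T by rewrite !trmx_mul trmxK mulmxA.
by rewrite [RHS]mxE.
Qed.

Lemma tmap_coord (R : comNzRingType) n (t : 'M[R]_n) a j :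
  (tmap t a) 0 j = \sum_i a 0 i * t i j.
Proof. by rewrite /tmap mxE. Qed.

Lemma coadP (R : comNzRingType) n (br : 'rV[R]_n -> 'rV[R]_n -> 'rV[R]_n)
  (hlie : is_lie_bracket br) x a y :
  pairing (coad br x a) y = - pairing a (br x y).
Proof.
rewrite {2}(row_sum_delta y) br_sumr // (raddf_sum (pairing a)) -sumrN /=; apply: eq_bigr => j _.
by rewrite brZr // pairingZr !mxE mulNr mulrC.
Qed.

Lemma pairing_br_coord (R : comNzRingType) n (br : 'rV[R]_n -> 'rV[R]_n -> 'rV[R]_n)
  (hlie : is_lie_bracket br) a u v :
  pairing a (br u v) = \sum_i \sum_k u 0 i * v 0 k * pairing a (br (ebasis i) (ebasis k)).
Proof.
rewrite {1}(row_sum_delta u) br_suml // (raddf_sum (pairing a)) /=; apply: eq_bigr => i _.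
rewrite brZl // pairingZr {1}(row_sum_delta v) br_sumr // (raddf_sum (pairing a)) big_distrr /=.
by apply: eq_bigr => k _; rewrite brZr // pairingZr mulrA.
Qed.

Definition eval3 (R : comNzRingType) n (a b c : 'rV[R]_n) (T : tensor3 R n) : R :=
  \sum_p \sum_q \sum_s T (p, q, s) * (a 0 p * b 0 q * c 0 s).

Lemma eval3_is_additive (R : comNzRingType) n (a b c : 'rV[R]_n) :
  zmod_morphism (eval3 a b c).
Proof.
move=> T1 T2; rewrite /eval3 -sumrB; apply: eq_bigr => p _; rewrite -sumrB.
apply: eq_bigr => q _; rewrite -sumrB; apply: eq_bigr => s _.
by rewrite !ffunE mulrBl.
Qed.

HB.instance Definition _ (R : comNzRingType) n (a b c : 'rV[R]_n) :=
  GRing.isZmodMorphism.Build _ _ (eval3 a b c) (eval3_is_additive a b c).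

Lemma eval3Z (R : comNzRingType) n (a b c : 'rV[R]_n) (k : R) (T : tensor3 R n) :
  eval3 a b c (k *: T) = k * eval3 a b c T.
Proof.
rewrite /eval3 mulr_sumr; apply: eq_bigr => p _; rewrite mulr_sumr; apply: eq_bigr => q _.
by rewrite mulr_sumr; apply: eq_bigr => s _; rewrite ffunE; exact: esym (mulrA _ _ _).
Qed.

Lemma eval3_tens3 (R : comNzRingType) n (a b c x y z : 'rV[R]_n) :
  eval3 a b c (tens3 x y z) = pairing a x * pairing b y * pairing c z.
Proof.
rewrite /eval3 /pairing -mulrA mulr_suml; apply: eq_bigr => p _.
rewrite mulr_suml mulr_sumr; apply: eq_bigr => q _.
by rewrite !mulr_sumr; apply: eq_bigr => s _; rewrite ffunE /=; ring.
Qed.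

Lemma eval3_ebasis (R : comNzRingType) n (T : tensor3 R n) p q s :
  eval3 (ebasis p) (ebasis q) (ebasis s) T = T (p, q, s).
Proof.
rewrite /eval3; under eq_bigr do under eq_bigr do under eq_bigr do rewrite !mulrA.
by under eq_bigr do under eq_bigr do rewrite sum_ebasis; under eq_bigr do rewrite sum_ebasis;
  rewrite sum_ebasis.
Qed.

Lemma eval3_inj (R : comNzRingType) n (T1 T2 : tensor3 R n) :
  (forall a b c, eval3 a b c T1 = eval3 a b c T2) -> T1 = T2.
Proof. by move=> E; apply/ffunP => -[[p q] s]; rewrite -!eval3_ebasis. Qed.

Lemma eval3_sum4 (R : comNzRingType) n (a b c : 'rV[R]_n)
  (F : 'I_n -> 'I_n -> 'I_n -> 'I_n -> tensor3 R n) :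
  eval3 a b c (\sum_i \sum_j \sum_k \sum_l F i j k l)
  = \sum_i \sum_j \sum_k \sum_l eval3 a b c (F i j k l).
Proof.
rewrite raddf_sum; apply: eq_bigr => i _; rewrite raddf_sum; apply: eq_bigr => j _.
by rewrite raddf_sum; apply: eq_bigr => k _; rewrite raddf_sum.
Qed.

Lemma sum_mul_sums (R : comNzRingType) n (U V f : 'I_n -> 'I_n -> R) :
  \sum_i \sum_k (\sum_j U i j) * (\sum_l V k l) * f i k
  = \sum_i \sum_j \sum_k \sum_l U i j * V k l * f i k.
Proof.
apply: eq_bigr => i _; rewrite exchange_big; apply: eq_bigr => k _.
rewrite !mulr_suml; apply: eq_bigr => j _.
by rewrite mulr_sumr mulr_suml.
Qed.

Section BracketEvaluation.
Variables (R : comNzRingType) (n : nat) (br : 'rV[R]_n -> 'rV[R]_n -> 'rV[R]_n).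
Hypothesis hlie : is_lie_bracket br.
Variables (r : 'M[R]_n) (a b c : 'rV[R]_n).

Lemma eval3_br12_13 : eval3 a b c (br12_13 br r) = pairing a (br (tmap r^T b) (tmap r^T c)).
Proof.
rewrite /br12_13 eval3_sum4 (pairing_br_coord hlie).
under [RHS]eq_bigr do under eq_bigr do rewrite !tmap_coord.
rewrite sum_mul_sums; apply: eq_bigr => i _; apply: eq_bigr => j _.
apply: eq_bigr => k _; apply: eq_bigr => l _.
by rewrite eval3Z eval3_tens3 !pairing_ebasis !mxE; ring.
Qed.

Lemma eval3_br12_23 : eval3 a b c (br12_23 br r) = pairing b (br (tmap r a) (tmap r^T c)).
Proof.
rewrite /br12_23 eval3_sum4 (pairing_br_coord hlie).
under [RHS]eq_bigr do under eq_bigr do rewrite !tmap_coord.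
rewrite sum_mul_sums exchange_big; apply: eq_bigr => i _; apply: eq_bigr => j _.
apply: eq_bigr => k _; apply: eq_bigr => l _.
by rewrite eval3Z eval3_tens3 !pairing_ebasis !mxE; ring.
Qed.

Lemma eval3_br13_23 : eval3 a b c (br13_23 br r) = pairing c (br (tmap r a) (tmap r b)).
Proof.
rewrite /br13_23 eval3_sum4 (pairing_br_coord hlie).
under [RHS]eq_bigr do under eq_bigr do rewrite !tmap_coord.
rewrite sum_mul_sums exchange_big; apply: eq_bigr => i _; apply: eq_bigr => j _.
rewrite exchange_big; apply: eq_bigr => k _; apply: eq_bigr => l _.
by rewrite eval3Z eval3_tens3 !pairing_ebasis; ring.
Qed.

End BracketEvaluation.

Definition ad_mx (R : comNzRingType) n (br : 'rV[R]_n -> 'rV[R]_n -> 'rV[R]_n)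
  (x : 'rV[R]_n) : 'M[R]_n :=
  \matrix_(i, j) br x (ebasis i) 0 j.

Section Invariance.
Variables (R : comNzRingType) (n : nat) (br : 'rV[R]_n -> 'rV[R]_n -> 'rV[R]_n).
Hypothesis hlie : is_lie_bracket br.

Lemma br_ad_mx x w : br x w = w *m ad_mx br x.
Proof.
rewrite {1}(row_sum_delta w) br_sumr //; apply/rowP => j.
by rewrite summxE !mxE; apply: eq_bigr => i _; rewrite brZr // !mxE.
Qed.

Lemma tens2E (x y : 'rV[R]_n) p q : tens2 x y p q = x 0 p * y 0 q.
Proof. by rewrite mxE. Qed.

Lemma ebasis_coordC (i j : 'I_n) : (ebasis i : 'rV[R]_n) 0 j = (ebasis j : 'rV[R]_n) 0 i.
Proof. by rewrite !mxE eq_sym. Qed.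

Lemma invariant_ad_mx (t : 'M[R]_n) x :
  invariant_tensor br t -> t *m ad_mx br x + (ad_mx br x)^T *m t = 0.
Proof.
move=> Hinv; apply/matrixP => p q; rewrite -(Hinv x) summxE.
under [RHS]eq_bigr do rewrite summxE.
under [RHS]eq_bigr do under eq_bigr do rewrite mxE mxE !tens2E mulrDr.
under [RHS]eq_bigr do rewrite big_split /=.
rewrite [LHS]mxE [X in X + _]mxE [X in _ + X]mxE big_split /= addrC.
congr (_ + _).
  apply: eq_bigr => i _; rewrite !mxE -(sum_ebasis (fun j => br x (ebasis i) 0 p * t i j) q).
  by apply: eq_bigr => j _; rewrite ebasis_coordC; ring.
rewrite [RHS]exchange_big; apply: eq_bigr => j _ /=.
rewrite !mxE -(sum_ebasis (fun i => t i j * br x (ebasis j) 0 q) p).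
by apply: eq_bigr => i _; rewrite ebasis_coordC; ring.
Qed.

Lemma invariant_swap (t : 'M[R]_n) :
  invariant_tensor br t -> t^T = t ->
  forall x u v, pairing u (br x (tmap t v)) = - pairing v (br x (tmap t u)).
Proof.
move=> Hinv tsym x u v.
have adj : (t *m ad_mx br x)^T = - (t *m ad_mx br x).
  apply/eqP; rewrite trmx_mul tsym -addr_eq0 addrC.
  by rewrite (invariant_ad_mx x Hinv).
rewrite !br_ad_mx /tmap -!mulmxA pairingC (tmap_adjoint (t *m ad_mx br x)) adj.
by rewrite /tmap mulmxN pairingC raddfN.
Qed.

End Invariance.

(* For any map A that is skew for the pairing and any
   map B satisfying the invariance identity, the Yang-Baxter combination
   built from r = A + B and r^t = B - A splits into a pure A-part, which is
   the operator expression of the theorem, and a pure B-part; all mixed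
   terms cancel. *)
Section Decomposition.
Variables (R : comNzRingType) (n : nat) (br : 'rV[R]_n -> 'rV[R]_n -> 'rV[R]_n).
Hypothesis hlie : is_lie_bracket br.
Variables (A B : 'rV[R]_n -> 'rV[R]_n).
Hypothesis A_skew : forall u v, pairing (A u) v = - pairing (A v) u.
Hypothesis B_inv : forall x u v, pairing u (br x (B v)) = - pairing v (br x (B u)).

Lemma pairing_coad_term a b c :
  pairing c (A (coad br (A a) b - coad br (A b) a))
  = pairing b (br (A a) (A c)) - pairing a (br (A b) (A c)).
Proof.
rewrite pairingC A_skew raddfB /= !(pairingC (A c)) !(coadP hlie).
by rewrite opprB opprK addrC.
Qed.

Lemma B_inv_left x u v : pairing u (br (B v) x) = - pairing v (br (B u) x).
Proof. by rewrite !(br_anti hlie (B _)) !raddfN /= B_inv. Qed.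

Lemma cybe_decomposition a b c :
  pairing a (br (B b - A b) (B c - A c)) + pairing b (br (A a + B a) (B c - A c))
    + pairing c (br (A a + B a) (A b + B b))
  = pairing c (br (A a) (A b) - A (coad br (A a) b - coad br (A b) a))
    + pairing c (br (B a) (B b)).
Proof.
have e1 : pairing a (br (B b) (B c)) = pairing c (br (B a) (B b)).
  by rewrite B_inv (br_anti hlie (B b)) raddfN /= opprK.
have e2 : pairing b (br (B a) (B c)) = - pairing c (br (B a) (B b)) by rewrite B_inv.
have e3 : pairing a (br (A b) (B c)) = pairing c (br (B a) (A b)).
  by rewrite B_inv (br_anti hlie (A b)) raddfN /= opprK.
have e4 : pairing b (br (A a) (B c)) = - pairing c (br (A a) (B b)) by rewrite B_inv.
have e5 : pairing a (br (B b) (A c)) = - pairing b (br (B a) (A c)) by rewrite B_inv_left.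
rewrite !(brBl hlie) !(brBr hlie) !(brDl hlie) !(brDr hlie).
rewrite !(raddfB (pairing _), raddfD (pairing _)) /= pairing_coad_term.
by rewrite e1 e2 e3 e4 e5; ring.
Qed.

End Decomposition.

Lemma tmap_skew (R : comNzRingType) n (k : R) (t : 'M[R]_n) u v :
  pairing (tmap (k *: (t - t^T)) u) v = - pairing (tmap (k *: (t - t^T)) v) u.
Proof.
rewrite tmap_adjoint linearZ /= linearB /= trmxK -opprB scalerN /tmap mulmxN.
by rewrite pairingC raddfN /= pairingC.
Qed.

Lemma skew_add_sym (F : fieldType) n (t : 'M[F]_n) : (2 : F) != 0 ->
  2^-1 *: (t - t^T) + 2^-1 *: (t + t^T) = t.
Proof.
move=> h2; rewrite -scalerDr addrACA addNr addr0 -mulr2n -scaler_nat scalerA.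
by rewrite mulVf // scale1r.
Qed.

Lemma sym_sub_skew (F : fieldType) n (t : 'M[F]_n) : (2 : F) != 0 ->
  2^-1 *: (t + t^T) - 2^-1 *: (t - t^T) = t^T.
Proof.
move=> h2; rewrite -scalerBr opprB (addrC t) addrACA subrr addr0 -mulr2n -scaler_nat.
by rewrite scalerA mulVf // scale1r.
Qed.

Section TensorEquationEvaluation.
Variables (F : fieldType) (n : nat) (br : 'rV[F]_n -> 'rV[F]_n -> 'rV[F]_n).
Hypothesis hlie : is_lie_bracket br.
Variables (r : 'M[F]_n) (kappa : F).
Hypothesis two_neq0 : (2 : F) != 0.

Local Notation alpha := (tmap (2^-1 *: (r - r^T))).
Local Notation beta_t := (2^-1 *: (r + r^T)).
Local Notation beta := (tmap beta_t).

Hypothesis beta_invariant : invariant_tensor br beta_t.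

Lemma r_split u : tmap r u = alpha u + beta u.
Proof. by rewrite /tmap -mulmxDr skew_add_sym. Qed.

Lemma rT_split u : tmap r^T u = beta u - alpha u.
Proof. by rewrite /tmap -mulmxBr sym_sub_skew. Qed.

Lemma rsym_split u : tmap (r + r^T) u = 2 *: beta u.
Proof. by rewrite /tmap -scalemxAr scalerA mulfV // scale1r. Qed.

(* beta is symmetric, so its invariance gives the swap identity *)
Lemma beta_swap x u v : pairing u (br x (beta v)) = - pairing v (br x (beta u)).
Proof.
have beta_sym : beta_t^T = beta_t by rewrite linearZ /= linearD /= trmxK addrC.
by rewrite (invariant_swap hlie beta_invariant beta_sym) opprK.
Qed.

Lemma tensor_equation_eval a b c :
  eval3 a b c (br12_13 br r + br12_23 br r + br13_23 br r)
    - eval3 a b c (((kappa + 1) / 4) *: sym_bracket br r)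
  = pairing c (br (alpha a) (alpha b)
      - alpha (coad br (alpha a) b - coad br (alpha b) a)
      - kappa *: br (beta a) (beta b)).
Proof.
rewrite !(raddfD (eval3 a b c)) /= eval3Z /sym_bracket.
rewrite (eval3_br12_13 hlie) (eval3_br12_23 hlie) !(eval3_br13_23 hlie).
rewrite !rT_split !r_split !rsym_split (brZl hlie) (brZr hlie) !pairingZr.
rewrite (cybe_decomposition hlie (tmap_skew 2^-1 r) beta_swap).
have four_neq0 : (4 : F) != 0 by rewrite -[4]/((2 * 2)%N%:R) natrM mulf_neq0.
by rewrite !(raddfB (pairing c)) /= pairingZr; field.
Qed.

End TensorEquationEvaluation.

Theorem theorem3p9 (R : realFieldType) (n : nat)
  (br : 'rV[R]_n -> 'rV[R]_n -> 'rV[R]_n) (hlie : is_lie_bracket br)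
  (r : 'M[R]_n) (kappa : R) :
  let alpha := tmap (2^-1 *: (r - r^T)) in
  let beta_t := 2^-1 *: (r + r^T) in
  let beta := tmap beta_t in
  invariant_tensor br beta_t ->
  (br12_13 br r + br12_23 br r + br13_23 br r
     = ((kappa + 1) / 4) *: sym_bracket br r
   <->
   forall a b : 'rV[R]_n,
     br (alpha a) (alpha b)
       - alpha (coad br (alpha a) b - coad br (alpha b) a)
     = kappa *: br (beta a) (beta b)).
Proof.
move=> alpha beta_t beta; rewrite {}/alpha {}/beta {}/beta_t => Hinv.
have two_neq0 : (2 : R) != 0 by rewrite pnatr_eq0.
have key := tensor_equation_eval hlie kappa two_neq0 Hinv.
split => [E a b | E].
  apply/eqP; rewrite -subr_eq0; apply/eqP; apply: pairing_eq0 => c.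
  by rewrite -key E subrr.
apply: eval3_inj => a b c; apply/eqP; rewrite -subr_eq0 key.
by rewrite E subrr raddf0.
Qed.
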